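(* Let $\mathcal{D}$ be the bipartite double scheme of the (metric) association scheme of the dodecahedron graph, with distinguished relation $R_1$ whose scheme graph is the bipartite double of the dodecahedron. Then every association scheme $(X,\mathcal{R})$ with a distinguished relation having the same relation-distribution diagram as $(\mathcal{D},R_1)$ is isomorphic to $\mathcal{D}$ (with the distinguished relation corresponding to $R_1$).
   Context: A (symmetric) association scheme with rank $d+1$ on a finite set $X$ is a partition $\mathcal{R}=\{R_0,\dots,R_d\}$ of $X\times X$ with $R_0$ the diagonal, each $R_i$ symmetric, and numbers $p^h_{ij}$ such that for every $(x,y)\in R_h$ the number of $z$ with $(x,z)\in R_i$, $(z,y)\in R_j$ equals $p^h_{ij}$; $k_i=p^0_{ii}$ is the valency of $R_i$. Two schemes $(X,\{R_i\})$, $(X',\{R'_i\})$ with distinguished relations $R_1$, $R'_1$ have the same relation-distribution diagram if they have the same rank and there is a bijection $\sigma$ of the index set with $\sigma(0)=0$, $\sigma(1)=1$, $k_i=k'_{\sigma(i)}$ and $p^i_{1j}=p'^{\sigma(i)}_{1\sigma(j)}$ for all $i,j$. The metric association scheme of a distance-regular graph has as relations the distance-$i$ relations. The direct product of schemes with relation matrices $A_i$ and $A'_j$ has relation matrices $A_i\otimes A'_j$; the bipartite double scheme of a scheme is its direct product with the rank-2 scheme on two points. The bipartite double of a graph $\Gamma$ on $V$ has vertices $x^{\pm}$ ($x\in V$), with $x^+\sim y^-$ iff $x\sim y$ in $\Gamma$. *)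

From HB Require Import structures.
From mathcomp Require Import all_boot all_order.
Set Implicit Arguments. Unset Strict Implicit. Unset Printing Implicit Defensive.

(* A scheme on a finite set X with index set I is given by a function
   rel : X -> X -> I assigning to each pair the index of the relation
   containing it (this is exactly a partition of X*X indexed by I);
   r0 is the index of the diagonal relation R_0. *)
Definition is_assoc_scheme (X I : finType) (rel : X -> X -> I) (r0 : I) : Prop :=
  (forall x y, (rel x y == r0) = (x == y)) /\
  (forall x y, rel x y = rel y x) /\
  (forall i, exists x y, rel x y = i) /\
  (forall h i j, exists p : nat, forall x y, rel x y = h ->
         #|[set z | (rel x z == i) && (rel z y == j)]| = p).

(* The intersection number p^h_{ij}, computed on some pair (x,y) in R_h
   (well defined for an association scheme; 0 if R_h is empty). *)
Definition pnum (X I : finType) (rel : X -> X -> I) (h i j : I) : nat :=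
  if [pick xy : X * X | rel xy.1 xy.2 == h] is Some xy
  then #|[set z | (rel xy.1 z == i) && (rel z xy.2 == j)]| else 0.

Definition valency (X I : finType) (rel : X -> X -> I) (r0 i : I) : nat :=
  pnum rel r0 i i.

Definition same_rdd (X I Y J : finType) (rel : X -> X -> I) (r0 r1 : I)
    (rel' : Y -> Y -> J) (s0 s1 : J) : Prop :=
  exists sigma : I -> J,
    [/\ bijective sigma, sigma r0 = s0, sigma r1 = s1,
        (forall i, valency rel r0 i = valency rel' s0 (sigma i))
      & (forall i j, pnum rel i r1 j = pnum rel' (sigma i) s1 (sigma j))].

Definition scheme_iso (X I Y J : finType) (rel : X -> X -> I) (r1 : I)
    (rel' : Y -> Y -> J) (s1 : J) : Prop :=
  exists f : X -> Y, exists tau : I -> J,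
    [/\ bijective f, bijective tau, tau r1 = s1
      & forall x y, rel' (f x) (f y) = tau (rel x y)].

Fixpoint ball (T : finType) (e : rel T) (k : nat) (x : T) : {set T} :=
  if k is k'.+1 then
    ball e k' x :|: [set z | [exists w in ball e k' x, e w z]]
  else [set x].

(* dist x y = number of k < #|T| with y not in ball k x; this is the graph
   distance for connected graphs (distances are < #|T|). *)
Definition gdist (T : finType) (e : rel T) (x y : T) : nat :=
  \sum_(k < #|T|) (y \notin ball e k x).

(* The dodecahedron = generalized Petersen graph GP(10,2):
   outer vertices (i,false), inner vertices (i,true), i mod 10. *)
Definition dodeca_adj : rel ('I_10 * bool) := fun x y =>
  match x.2, y.2 with
  | false, false => (val y.1 == (x.1 + 1) %% 10) || (val x.1 == (y.1 + 1) %% 10)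
  | true, true => (val y.1 == (x.1 + 2) %% 10) || (val x.1 == (y.1 + 2) %% 10)
  | _, _ => x.1 == y.1
  end.

(* Metric scheme of the dodecahedron (diameter 5): relation index = distance. *)
Definition dodeca_rel (x y : 'I_10 * bool) : 'I_6 := inord (gdist dodeca_adj x y).

Definition two_rel (a b : bool) : 'I_2 := if a == b then ord0 else ord_max.

Definition prod_rel (X I Y J : Type) (rel1 : X -> X -> I) (rel2 : Y -> Y -> J)
  (u v : X * Y) : I * J := (rel1 u.1 v.1, rel2 u.2 v.2).

Definition D_rel : ('I_10 * bool) * bool -> ('I_10 * bool) * bool -> 'I_6 * 'I_2 :=
  prod_rel dodeca_rel two_rel.

Definition D_R0 : 'I_6 * 'I_2 := (ord0, ord0).
(* R_1 of D: A_1 (x) (J - I), whose graph is the bipartite double. *)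
Definition D_R1 : 'I_6 * 'I_2 := (inord 1, ord_max).

From HB Require Import structures.
From mathcomp Require Import all_boot all_order.
From mathcomp Require Import zify.
Set Implicit Arguments. Unset Strict Implicit. Unset Printing Implicit Defensive.

(* Transport the relation indices of X to those of D along the diagram bijection and code
   them as numbers 0..11, so that R_1 becomes 3.  The valencies force |X| = 40, every vertex
   has three R_1-neighbours, and the numbers p^h_{1j} prescribe how the relations from any
   vertex are distributed over the neighbours of any other.  Starting from a vertex and its
   three neighbours, the 40 vertices of D are placed one at a time, each as a neighbour of a
   placed vertex in a prescribed relation to another one; a certificate of constraint
   propagation steps, checked by computation, shows that these counting conditions force
   every relation among the placed vertices to be the one of D.  The placed vertices are then
   pairwise distinct, hence exhaust X, and the placement is the isomorphism. *)

(** * Association schemes and graph distance *)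

Section SchemeCounting.
Variables (X I : finType) (rel : X -> X -> I) (r0 : I).
Hypothesis scheme : is_assoc_scheme rel r0.

Lemma card_scheme_pnum x y i j :
  #|[set z | (rel x z == i) && (rel z y == j)]| = pnum rel (rel x y) i j.
Proof.
have [_ [_ [_ pnumP]]] := scheme; have [p card_p] := pnumP (rel x y) i j.
rewrite card_p // /pnum; case: pickP => [[a b] /= /eqP ab_xy|/(_ (x, y))]; last by rewrite eqxx.
by rewrite card_p.
Qed.

Lemma card_scheme_valency : #|X| = \sum_i valency rel r0 i.
Proof.
have [diag [sym [nonempty _]]] := scheme.
have [x0 [_ _]] := nonempty r0.
rewrite -sum1_card (partition_big (rel x0) xpredT) //=; apply: eq_bigr => i _.
have /eqP <- : rel x0 x0 == r0 by rewrite diag.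
rewrite /valency -card_scheme_pnum sum1_card; apply: eq_card => z.
by rewrite !inE (sym z x0) andbb.
Qed.

End SchemeCounting.

Lemma scheme_iso_of_pullback (X I Y J : finType) (rel : X -> X -> I) (r1 : I)
    (rel' : Y -> Y -> J) (s0 s1 : J) (sigma : I -> J) (g : Y -> X) :
  bijective sigma -> sigma r1 = s1 -> (forall y y', (rel' y y' == s0) = (y == y')) ->
  #|X| <= #|Y| -> (forall y y', rel' y y' = sigma (rel (g y) (g y'))) ->
  scheme_iso rel r1 rel' s1.
Proof.
move=> bij_sigma sigma_r1 diag' cardXY relg.
have g_inj : injective g.
  by move=> y y' eq_g; apply/eqP; rewrite -diag' relg eq_g -relg diag'.
have [f gK fK] : bijective g by exact: inj_card_bij g_inj cardXY.
exists f, sigma; split => //; first by exists g.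
by move=> x x'; rewrite relg !fK.
Qed.

Lemma card_set_in_count (T : finType) (s : seq T) (P : pred T) :
  uniq s -> #|[set z in s | P z]| = count P s.
Proof.
move=> uniq_s; rewrite -size_filter -(card_uniqP (filter_uniq P uniq_s)).
by apply: eq_card => z; rewrite inE mem_filter andbC.
Qed.

Lemma card_set_count (T : finType) (s : seq T) (P : pred T) :
  uniq s -> (forall x, x \in s) -> #|[set z | P z]| = count P s.
Proof.
move=> uniq_s mem_s; rewrite -card_set_in_count //.
by apply: eq_card => z; rewrite !inE mem_s.
Qed.

Section BallIteration.
Variables (T : finType) (e : rel T) (s : seq T).
Hypothesis mem_s : forall x, x \in s.

Definition ball_step (B : seq T) : seq T :=
  [seq z <- s | (z \in B) || has (e^~ z) B].

Lemma mem_ball_iter k x y : (y \in ball e k x) = (y \in iter k ball_step [:: x]).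
Proof.
elim: k y => [|k IHk] y /=; first by rewrite !inE.
rewrite mem_filter mem_s andbT in_setU IHk inE; congr (_ || _).
apply/existsP/hasP => [[w /andP [w_ball e_wy]]|[w w_ball e_wy]].
  by exists w; rewrite -?IHk.
by exists w; rewrite IHk w_ball.
Qed.

Lemma gdist_traject x y :
  gdist e x y = sumn [seq (y \notin B) : nat | B <- traject ball_step [:: x] #|T|].
Proof.
have -> : traject ball_step [:: x] #|T| = [seq iter k ball_step [:: x] | k <- iota 0 #|T|].
  apply: (@eq_from_nth _ [::]); rewrite size_traject ?size_map ?size_iota // => k lt_k.
  rewrite (set_nth_default [:: x]) ?size_traject // nth_traject //.
  by rewrite (nth_map 0) ?size_iota // nth_iota.
rewrite sumnE !big_map /gdist -(subn0 #|T|) -/(index_iota 0 _) big_mkord subn0.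
by apply: eq_bigr => k _; rewrite mem_ball_iter.
Qed.

End BallIteration.

(** * The scheme D *)

(* D_R0 has code 0 and D_R1 code 3. *)
Definition rcode (h : 'I_6 * 'I_2) : nat := 2 * h.1 + h.2.
Definition rdecode (n : nat) : 'I_6 * 'I_2 := (inord n./2, inord (odd n)).

Lemma rcode_lt h : rcode h < 12.
Proof. by case: h => [[i lt_i] [e lt_e]]; rewrite /rcode /=; lia. Qed.

Lemma rdecode_double d (e : bool) : rdecode (2 * d + e) = (inord d, inord e).
Proof. by rewrite /rdecode addnC mul2n half_bit_double oddD odd_double addbF oddb. Qed.

Lemma rcodeK : cancel rcode rdecode.
Proof.
case=> i [[|[|//]] lt_e] /=;
  [have := rdecode_double i false | have := rdecode_double i true];
  by rewrite /rcode /= => ->; congr pair; apply: val_inj; rewrite /= inordK.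
Qed.

Lemma rdecodeK n : n < 12 -> rcode (rdecode n) = n.
Proof.
move=> lt_n; rewrite /rcode /= !inordK; first by rewrite addnC mul2n odd_double_half.
- by case: (odd n).
- by rewrite ltn_half_double.
Qed.

Definition dodeca_dist_tab : seq (seq nat) := [::
  [:: 0; 1; 2; 3; 4; 5; 4; 3; 2; 1; 1; 2; 2; 3; 3; 4; 3; 3; 2; 2];
  [:: 1; 0; 1; 2; 3; 4; 5; 4; 3; 2; 2; 1; 2; 2; 3; 3; 4; 3; 3; 2];
  [:: 2; 1; 0; 1; 2; 3; 4; 5; 4; 3; 2; 2; 1; 2; 2; 3; 3; 4; 3; 3];
  [:: 3; 2; 1; 0; 1; 2; 3; 4; 5; 4; 3; 2; 2; 1; 2; 2; 3; 3; 4; 3];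
  [:: 4; 3; 2; 1; 0; 1; 2; 3; 4; 5; 3; 3; 2; 2; 1; 2; 2; 3; 3; 4];
  [:: 5; 4; 3; 2; 1; 0; 1; 2; 3; 4; 4; 3; 3; 2; 2; 1; 2; 2; 3; 3];
  [:: 4; 5; 4; 3; 2; 1; 0; 1; 2; 3; 3; 4; 3; 3; 2; 2; 1; 2; 2; 3];
  [:: 3; 4; 5; 4; 3; 2; 1; 0; 1; 2; 3; 3; 4; 3; 3; 2; 2; 1; 2; 2];
  [:: 2; 3; 4; 5; 4; 3; 2; 1; 0; 1; 2; 3; 3; 4; 3; 3; 2; 2; 1; 2];
  [:: 1; 2; 3; 4; 5; 4; 3; 2; 1; 0; 2; 2; 3; 3; 4; 3; 3; 2; 2; 1];
  [:: 1; 2; 2; 3; 3; 4; 3; 3; 2; 2; 0; 3; 1; 4; 2; 5; 2; 4; 1; 3];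
  [:: 2; 1; 2; 2; 3; 3; 4; 3; 3; 2; 3; 0; 3; 1; 4; 2; 5; 2; 4; 1];
  [:: 2; 2; 1; 2; 2; 3; 3; 4; 3; 3; 1; 3; 0; 3; 1; 4; 2; 5; 2; 4];
  [:: 3; 2; 2; 1; 2; 2; 3; 3; 4; 3; 4; 1; 3; 0; 3; 1; 4; 2; 5; 2];
  [:: 3; 3; 2; 2; 1; 2; 2; 3; 3; 4; 2; 4; 1; 3; 0; 3; 1; 4; 2; 5];
  [:: 4; 3; 3; 2; 2; 1; 2; 2; 3; 3; 5; 2; 4; 1; 3; 0; 3; 1; 4; 2];
  [:: 3; 4; 3; 3; 2; 2; 1; 2; 2; 3; 2; 5; 2; 4; 1; 3; 0; 3; 1; 4];
  [:: 3; 3; 4; 3; 3; 2; 2; 1; 2; 2; 4; 2; 5; 2; 4; 1; 3; 0; 3; 1];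
  [:: 2; 3; 3; 4; 3; 3; 2; 2; 1; 2; 1; 4; 2; 5; 2; 4; 1; 3; 0; 3];
  [:: 2; 2; 3; 3; 4; 3; 3; 2; 2; 1; 3; 1; 4; 2; 5; 2; 4; 1; 3; 0]].

Definition dodeca_dist (x y : 'I_10 * bool) : nat :=
  nth 0 (nth [::] dodeca_dist_tab (x.1 + 10 * x.2)) (y.1 + 10 * y.2).

(* [inord] does not reduce under [vm_compute] (it matches on the opaque [idP]). *)
Definition ord10 (i : nat) : 'I_10 := Ordinal (ltn_pmod i (isT : 0 < 10)).

Lemma ord10_val i : ord10 (val i) = i.
Proof. by apply: val_inj; rewrite /= modn_small. Qed.

Definition dodeca_vertices : seq ('I_10 * bool) :=
  [seq (ord10 i, b) | b <- [:: false; true], i <- iota 0 10].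

Lemma mem_dodeca_vertices x : x \in dodeca_vertices.
Proof.
case: x => i b; apply/allpairsPdep; exists b, (val i).
by rewrite ord10_val mem_iota ltn_ord; case: b.
Qed.

Lemma all_dodeca_vertices (P : pred ('I_10 * bool)) : all P dodeca_vertices -> forall x, P x.
Proof. by move=> /allP all_P x; apply: all_P (mem_dodeca_vertices x). Qed.

Lemma gdist_dodeca x y : gdist dodeca_adj x y = dodeca_dist x y.
Proof.
rewrite (gdist_traject _ mem_dodeca_vertices) card_prod card_ord card_bool.
have : all (fun x => let balls := traject (ball_step dodeca_adj dodeca_vertices) [:: x] 20 in
         all (fun y => sumn [seq (y \notin B) : nat | B <- balls] == dodeca_dist x y)
           dodeca_vertices) dodeca_vertices.
  by vm_compute.
by move=> /all_dodeca_vertices /(_ x) /all_dodeca_vertices /(_ y) /eqP.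
Qed.

Definition Dvertex := (('I_10 * bool) * bool)%type.

Definition dcode (u v : Dvertex) : nat := 2 * dodeca_dist u.1 v.1 + (u.2 != v.2).

Lemma D_relE u v : D_rel u v = rdecode (dcode u v).
Proof.
rewrite /D_rel /prod_rel /dodeca_rel gdist_dodeca /dcode rdecode_double.
by congr pair; rewrite /two_rel; case: eqP => _; apply: val_inj; rewrite /= inordK.
Qed.

Definition p1_rows : seq (seq nat) := [::
  [:: 0; 0; 0; 3; 0; 0; 0; 0; 0; 0; 0; 0];
  [:: 0; 0; 3; 0; 0; 0; 0; 0; 0; 0; 0; 0];
  [:: 0; 1; 0; 0; 0; 2; 0; 0; 0; 0; 0; 0];
  [:: 1; 0; 0; 0; 2; 0; 0; 0; 0; 0; 0; 0];
  [:: 0; 0; 0; 1; 0; 1; 0; 1; 0; 0; 0; 0];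
  [:: 0; 0; 1; 0; 1; 0; 1; 0; 0; 0; 0; 0];
  [:: 0; 0; 0; 0; 0; 1; 0; 1; 0; 1; 0; 0];
  [:: 0; 0; 0; 0; 1; 0; 1; 0; 1; 0; 0; 0];
  [:: 0; 0; 0; 0; 0; 0; 0; 2; 0; 0; 0; 1];
  [:: 0; 0; 0; 0; 0; 0; 2; 0; 0; 0; 1; 0];
  [:: 0; 0; 0; 0; 0; 0; 0; 0; 0; 3; 0; 0];
  [:: 0; 0; 0; 0; 0; 0; 0; 0; 3; 0; 0; 0]].

Definition valency_row : seq nat := [:: 1; 1; 3; 3; 6; 6; 6; 6; 3; 3; 1; 1].

Definition p1_tab (h j : nat) : nat := nth 0 (nth [::] p1_rows h) j.
Definition valency_tab (h : nat) : nat := nth 0 valency_row h.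

Definition D_vertices : seq Dvertex :=
  [seq (x, a) | a <- [:: false; true], x <- dodeca_vertices].

Lemma mem_D_vertices u : u \in D_vertices.
Proof.
case: u => x a; apply/allpairsPdep; exists a, x.
by rewrite mem_dodeca_vertices; case: a.
Qed.

Lemma uniq_D_vertices : uniq D_vertices.
Proof. by vm_compute. Qed.

Lemma all_D_vertices (P : pred Dvertex) : all P D_vertices -> forall u, P u.
Proof. by move=> /allP all_P u; apply: all_P (mem_D_vertices u). Qed.

Lemma dcode_eq0 u v : (dcode u v == 0) = (u == v).
Proof.
suff /all_D_vertices/(_ u)/all_D_vertices/(_ v)/eqP // :
  all (fun u => all (fun v => (dcode u v == 0) == (u == v)) D_vertices) D_vertices.
by vm_compute.
Qed.

Lemma dcode_lt u v : dcode u v < 12.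
Proof.
suff /all_D_vertices/(_ u)/all_D_vertices/(_ v) // :
  all (fun u => all (fun v => dcode u v < 12) D_vertices) D_vertices.
by vm_compute.
Qed.

Lemma card_dcode_p1 u v j : j < 12 ->
  #|[set z | (dcode u z == 3) && (dcode z v == j)]| = p1_tab (dcode u v) j.
Proof.
move=> lt_j; rewrite (card_set_count _ uniq_D_vertices mem_D_vertices).
suff /all_D_vertices/(_ u)/all_D_vertices/(_ v)/allP/(_ j) :
  all (fun u => all (fun v => all (fun j =>
    count (fun z => (dcode u z == 3) && (dcode z v == j)) D_vertices == p1_tab (dcode u v) j)
      (iota 0 12)) D_vertices) D_vertices.
  by rewrite mem_iota lt_j => /(_ isT) /eqP.
by vm_compute.
Qed.

Lemma card_dcode_valency u h : h < 12 ->
  #|[set z | (dcode u z == h) && (dcode z u == h)]| = valency_tab h.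
Proof.
move=> lt_h; rewrite (card_set_count _ uniq_D_vertices mem_D_vertices).
suff /all_D_vertices/(_ u)/allP/(_ h) :
  all (fun u => all (fun h =>
    count (fun z => (dcode u z == h) && (dcode z u == h)) D_vertices == valency_tab h)
      (iota 0 12)) D_vertices.
  by rewrite mem_iota lt_h => /(_ isT) /eqP.
by vm_compute.
Qed.

Lemma dcode_surj h : h < 12 -> exists u v, dcode u v = h.
Proof.
move=> lt_h.
suff /allP/(_ h) : all (fun h => has (fun u => has (fun v => dcode u v == h) D_vertices) D_vertices)
                     (iota 0 12).
  by rewrite mem_iota lt_h => /(_ isT) /hasP [u _ /hasP [v _ /eqP]]; exists u, v.
by vm_compute.
Qed.

Lemma rcode_D_rel u v : rcode (D_rel u v) = dcode u v.
Proof. by rewrite D_relE rdecodeK ?dcode_lt. Qed.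

Lemma D_rel_eq u v h : (D_rel u v == h) = (dcode u v == rcode h).
Proof. by rewrite -rcode_D_rel (can_eq rcodeK). Qed.

Lemma rcode_D_R1 : rcode D_R1 = 3.
Proof. by rewrite /rcode /= inordK. Qed.

Lemma pnum_D_R1 h j : pnum D_rel h D_R1 j = p1_tab (rcode h) (rcode j).
Proof.
rewrite /pnum; case: pickP => [[u v] /= /eqP <-|no_pair].
  rewrite rcode_D_rel -card_dcode_p1 ?rcode_lt //.
  by apply: eq_card => z; rewrite !inE !D_rel_eq rcode_D_R1.
have [u [v uv_h]] := dcode_surj (rcode_lt h).
by have := no_pair (u, v); rewrite /= D_rel_eq uv_h eqxx.
Qed.

Lemma valency_D h : valency D_rel D_R0 h = valency_tab (rcode h).
Proof.
rewrite /valency /pnum; case: pickP => [[u v] /=|no_pair].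
  rewrite D_rel_eq dcode_eq0 => /eqP <-; rewrite -(card_dcode_valency u) ?rcode_lt //.
  by apply: eq_card => z; rewrite !inE !D_rel_eq.
pose w : Dvertex := ((ord10 0, false), false).
by have := no_pair (w, w); rewrite /= D_rel_eq dcode_eq0 eqxx.
Qed.

Lemma sum_valency_D : \sum_h valency D_rel D_R0 h = 40.
Proof.
rewrite (eq_bigr _ (fun h _ => valency_D h)).
rewrite -(pair_bigA _ (fun i j => valency_tab (rcode (i, j)))).
by rewrite !big_ord_recr !big_ord0.
Qed.

Definition dvertex (n : nat) : Dvertex := ((ord10 n, odd (n %/ 10)), 20 <= n).

(* The vertices of D in the order in which they are placed. *)
Definition D_order : seq Dvertex := map dvertex
  [:: 0; 30; 21; 29; 12; 18; 11; 2; 8; 19; 22; 34; 36; 28; 33; 39; 32; 23; 27; 38;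
      31; 37; 1; 3; 4; 16; 14; 6; 7; 9; 15; 17; 10; 13; 20; 24; 25; 26; 35; 5].

Lemma size_D_order : size D_order = 40.
Proof. by []. Qed.

Lemma mem_D_order w : w \in D_order.
Proof. by move: w; apply: all_D_vertices; vm_compute. Qed.

Definition named_dcode (u v : nat) : nat :=
  dcode (nth (dvertex 0) D_order u) (nth (dvertex 0) D_order v).

Lemma nth_D_order_index w : nth (dvertex 0) D_order (index w D_order) = w.
Proof. exact/nth_index/mem_D_order. Qed.

Lemma named_dcode_index u v : named_dcode (index u D_order) (index v D_order) = dcode u v.
Proof. by rewrite /named_dcode; congr dcode; apply: nth_D_order_index. Qed.

(** * The reconstruction certificate *)

(* Vertex 0 is arbitrary and 1, 2, 3 are its neighbours; for v >= 4 and
   place_rule v = (p, q, j), vertex v is a neighbour of vertex p in relation j to vertex q. *)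
Definition place_rules : seq (nat*nat*nat) := [::
  (0,0,0); (0,0,0); (0,0,0); (0,0,0); (1,2,5); (1,2,7); (2,1,7); (2,1,5); (3,1,5); (3,1,7);
  (4,0,5); (4,0,7); (5,0,7); (5,0,5); (6,0,7); (6,0,5); (7,0,5); (7,0,7); (8,0,7); (8,0,5);
  (9,0,5); (9,0,7); (10,0,2); (10,0,6); (11,0,8); (11,0,6); (12,0,6); (12,0,8); (13,0,6);
  (13,0,2); (14,0,8); (15,0,6); (16,0,2); (17,0,6); (22,0,1); (23,0,9); (24,0,11); (25,0,9);
  (31,0,9); (35,0,10)].

Definition place_rule (v : nat) : nat * nat * nat := nth (0, 0, 0) place_rules v.

(* cand C u v lists the codes still possible for the relation between vertices u and v. *)
Definition cand_table := seq (seq (seq nat)).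

Definition cand (C : cand_table) u v : seq nat := nth [::] (nth [::] C u) v.

Definition set_cand (C : cand_table) u v s : cand_table :=
  set_nth [::] C u (set_nth [::] (nth [::] C u) v s).

Lemma cand_set_cand C u v s u' v' :
  cand (set_cand C u v s) u' v' = if (u' == u) && (v' == v) then s else cand C u' v'.
Proof.
rewrite /cand /set_cand !nth_set_nth /=.
by case: (u' =P u) => [->|] //=; rewrite nth_set_nth /=; case: (v' == v).
Qed.

Definition restrict (C : cand_table) u v (S : seq nat) : cand_table :=
  let s := [seq j <- cand C u v | j \in S] in set_cand (set_cand C u v s) v u s.

Definition p1_compatible (h j1 j2 j3 : nat) : bool :=
  all (fun j => count_mem j [:: j1; j2; j3] == p1_tab h j) (iota 0 12).

Definition nonzero_codes : seq nat := [seq j <- iota 0 12 | j != 0].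

(* Count a b c1 c2 c3: the c_i are the three neighbours of b, so the codes from a to them
   form the multiset prescribed by p^h_{1j}, h the code from a to b.
   Separate c d a: c and d differ when their candidate codes from a are disjoint. *)
Inductive step :=
  | Place of nat
  | Count of nat & nat & nat & nat & nat
  | Separate of nat & nat & nat.

Definition place_step (C : cand_table) v : option cand_table :=
  let: (p, q, j) := place_rule v in
  if [&& v < 40, 4 <= v, p < v, q < v, j < 12, size (cand C p q) == 1
       & 0 < p1_tab (head 0 (cand C p q)) j]
  then Some (restrict (restrict C p v [:: 3]) v q [:: j]) else None.

Definition count_step (C : cand_table) a b c1 c2 c3 : option cand_table :=
  if [&& a < 40, b < 40, c1 < 40, c2 < 40, c3 < 40, size (cand C a b) == 1,
         cand C b c1 == [:: 3], cand C b c2 == [:: 3], cand C b c3 == [:: 3],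
         0 \notin cand C c1 c2, 0 \notin cand C c1 c3 & 0 \notin cand C c2 c3]
  then
    let h := head 0 (cand C a b) in
    let s1 := cand C a c1 in let s2 := cand C a c2 in let s3 := cand C a c3 in
    let f1 := [seq x <- s1 | has (fun y => has (p1_compatible h x y) s3) s2] in
    let f2 := [seq y <- s2 | has (fun x => has (p1_compatible h x y) s3) s1] in
    let f3 := [seq z <- s3 | has (fun x => has (fun y => p1_compatible h x y z) s2) s1] in
    Some (restrict (restrict (restrict C a c1 f1) a c2 f2) a c3 f3)
  else None.

Definition separate_step (C : cand_table) c d a : option cand_table :=
  if [&& c < 40, d < 40, a < 40 & ~~ has (mem (cand C a d)) (cand C a c)]
  then Some (restrict C c d nonzero_codes) else None.

Definition run_step (C : cand_table) (st : step) : option cand_table :=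
  match st with
  | Place v => place_step C v
  | Count a b c1 c2 c3 => count_step C a b c1 c2 c3
  | Separate c d a => separate_step C c d a
  end.

Fixpoint run (C : cand_table) (l : seq step) : option cand_table :=
  if l is st :: l' then obind (run^~ l') (run_step C st) else Some C.

Definition initial_cands : cand_table :=
  let C := [seq [seq (if u == v then [:: 0] else iota 0 12) | v <- iota 0 40] | u <- iota 0 40] in
  let C := restrict (restrict (restrict C 0 1 [:: 3]) 0 2 [:: 3]) 0 3 [:: 3] in
  restrict (restrict (restrict C 1 2 nonzero_codes) 1 3 nonzero_codes) 2 3 nonzero_codes.

Definition certificate : seq step := [::
  Count 1 0 1 2 3; Count 2 0 1 2 3; Place 4; Separate 0 4 2; Separate 3 4 1; Place 5;
  Separate 0 5 2; Separate 3 5 1; Separate 4 5 2; Count 0 1 0 4 5; Count 3 1 0 4 5;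
  Count 4 1 0 4 5; Count 4 0 1 2 3; Count 5 0 1 2 3; Place 6; Separate 0 6 1; Separate 3 6 1;
  Separate 4 6 1; Separate 5 6 1; Count 6 1 0 4 5; Place 7; Separate 0 7 1; Separate 3 7 1;
  Separate 4 7 1; Separate 5 7 1; Separate 6 7 1; Count 7 1 0 4 5; Count 0 2 0 6 7;
  Count 3 2 0 6 7; Count 4 2 0 6 7; Count 5 2 0 6 7; Count 6 2 0 6 7; Count 6 0 1 2 3;
  Count 7 0 1 2 3; Place 8; Separate 0 8 1; Separate 2 8 1; Separate 4 8 1; Separate 5 8 1;
  Separate 6 8 1; Separate 7 8 3; Count 8 1 0 4 5; Place 9; Separate 0 9 1; Separate 2 9 1;
  Separate 4 9 1; Separate 5 9 1; Separate 6 9 3; Separate 7 9 1; Separate 8 9 1;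
  Count 9 1 0 4 5; Count 0 3 0 8 9; Count 2 3 0 8 9; Count 4 3 0 8 9; Count 5 3 0 8 9;
  Count 6 3 0 8 9; Count 7 3 0 8 9; Count 8 3 0 8 9; Count 8 0 1 2 3; Count 9 0 1 2 3;
  Count 8 2 0 6 7; Count 9 2 0 6 7; Place 10; Separate 1 10 0; Separate 2 10 0;
  Separate 3 10 0; Separate 5 10 0; Separate 6 10 0; Separate 7 10 0; Separate 8 10 0;
  Separate 9 10 0; Count 10 0 1 2 3; Place 11; Separate 1 11 0; Separate 2 11 0;
  Separate 3 11 0; Separate 5 11 0; Separate 6 11 0; Separate 7 11 0; Separate 8 11 0;
  Separate 9 11 0; Separate 10 11 0; Count 11 0 1 2 3; Count 1 4 1 10 11; Count 2 4 1 10 11;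
  Count 3 4 1 10 11; Count 5 4 1 10 11; Count 6 4 1 10 11; Count 7 4 1 10 11;
  Count 8 4 1 10 11; Count 9 4 1 10 11; Count 10 4 1 10 11; Count 10 1 0 4 5; Count 11 1 0 4 5;
  Count 10 2 0 6 7; Count 11 2 0 6 7; Count 10 3 0 8 9; Count 11 3 0 8 9; Place 12;
  Separate 1 12 0; Separate 2 12 0; Separate 3 12 0; Separate 4 12 0; Separate 6 12 0;
  Separate 7 12 0; Separate 8 12 0; Separate 9 12 0; Separate 10 12 0; Separate 11 12 5;
  Count 12 0 1 2 3; Place 13; Separate 1 13 0; Separate 2 13 0; Separate 3 13 0;
  Separate 4 13 0; Separate 6 13 0; Separate 7 13 0; Separate 8 13 0; Separate 9 13 0;
  Separate 10 13 5; Separate 11 13 0; Separate 12 13 0; Count 13 0 1 2 3; Count 1 5 1 12 13;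
  Count 2 5 1 12 13; Count 3 5 1 12 13; Count 4 5 1 12 13; Count 6 5 1 12 13;
  Count 7 5 1 12 13; Count 8 5 1 12 13; Count 9 5 1 12 13; Count 10 5 1 12 13;
  Count 11 5 1 12 13; Count 12 5 1 12 13; Count 12 1 0 4 5; Count 13 1 0 4 5; Count 12 2 0 6 7;
  Count 13 2 0 6 7; Count 12 3 0 8 9; Count 13 3 0 8 9; Count 12 4 1 10 11; Count 13 4 1 10 11;
  Place 14; Separate 1 14 0; Separate 2 14 0; Separate 3 14 0; Separate 4 14 0;
  Separate 5 14 0; Separate 7 14 0; Separate 8 14 0; Separate 9 14 0; Separate 10 14 0;
  Separate 11 14 6; Separate 12 14 6; Separate 13 14 0; Count 14 0 1 2 3; Place 15;
  Separate 1 15 0; Separate 2 15 0; Separate 3 15 0; Separate 4 15 0; Separate 5 15 0;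
  Separate 7 15 0; Separate 8 15 0; Separate 9 15 0; Separate 10 15 6; Separate 11 15 0;
  Separate 12 15 0; Separate 13 15 6; Separate 14 15 0; Count 15 0 1 2 3; Count 1 6 2 14 15;
  Count 2 6 2 14 15; Count 3 6 2 14 15; Count 4 6 2 14 15; Count 5 6 2 14 15;
  Count 7 6 2 14 15; Count 8 6 2 14 15; Count 9 6 2 14 15; Count 10 6 2 14 15;
  Count 11 6 2 14 15; Count 12 6 2 14 15; Count 13 6 2 14 15; Count 14 6 2 14 15;
  Count 14 1 0 4 5; Count 15 1 0 4 5; Count 14 2 0 6 7; Count 15 2 0 6 7; Count 14 3 0 8 9;
  Count 15 3 0 8 9; Count 14 4 1 10 11; Count 15 4 1 10 11; Count 14 5 1 12 13;
  Count 15 5 1 12 13; Place 16; Separate 1 16 0; Separate 2 16 0; Separate 3 16 0;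
  Separate 4 16 0; Separate 5 16 0; Separate 6 16 0; Separate 8 16 0; Separate 9 16 0;
  Separate 10 16 7; Separate 11 16 0; Separate 12 16 0; Separate 13 16 7; Separate 14 16 0;
  Separate 15 16 7; Count 16 0 1 2 3; Place 17; Separate 1 17 0; Separate 2 17 0;
  Separate 3 17 0; Separate 4 17 0; Separate 5 17 0; Separate 6 17 0; Separate 8 17 0;
  Separate 9 17 0; Separate 10 17 0; Separate 11 17 7; Separate 12 17 7; Separate 13 17 0;
  Separate 14 17 7; Separate 15 17 0; Separate 16 17 0; Count 17 0 1 2 3; Count 1 7 2 16 17;
  Count 2 7 2 16 17; Count 3 7 2 16 17; Count 4 7 2 16 17; Count 5 7 2 16 17;
  Count 6 7 2 16 17; Count 8 7 2 16 17; Count 9 7 2 16 17; Count 10 7 2 16 17;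
  Count 11 7 2 16 17; Count 12 7 2 16 17; Count 13 7 2 16 17; Count 14 7 2 16 17;
  Count 15 7 2 16 17; Count 16 7 2 16 17; Count 16 1 0 4 5; Count 17 1 0 4 5; Count 16 2 0 6 7;
  Count 17 2 0 6 7; Count 16 3 0 8 9; Count 17 3 0 8 9; Count 16 4 1 10 11; Count 17 4 1 10 11;
  Count 16 5 1 12 13; Count 17 5 1 12 13; Count 16 6 2 14 15; Count 17 6 2 14 15; Place 18;
  Separate 1 18 0; Separate 2 18 0; Separate 3 18 0; Separate 4 18 0; Separate 5 18 0;
  Separate 6 18 0; Separate 7 18 0; Separate 9 18 0; Separate 10 18 0; Separate 11 18 8;
  Separate 12 18 8; Separate 13 18 0; Separate 14 18 8; Separate 15 18 0; Separate 16 18 0;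
  Separate 17 18 8; Count 18 0 1 2 3; Place 19; Separate 1 19 0; Separate 2 19 0;
  Separate 3 19 0; Separate 4 19 0; Separate 5 19 0; Separate 6 19 0; Separate 7 19 0;
  Separate 9 19 0; Separate 10 19 8; Separate 11 19 0; Separate 12 19 0; Separate 13 19 8;
  Separate 14 19 0; Separate 15 19 8; Separate 16 19 8; Separate 17 19 0; Separate 18 19 0;
  Count 19 0 1 2 3; Count 1 8 3 18 19; Count 2 8 3 18 19; Count 3 8 3 18 19; Count 4 8 3 18 19;
  Count 5 8 3 18 19; Count 6 8 3 18 19; Count 7 8 3 18 19; Count 9 8 3 18 19;
  Count 10 8 3 18 19; Count 11 8 3 18 19; Count 12 8 3 18 19; Count 13 8 3 18 19;
  Count 14 8 3 18 19; Count 15 8 3 18 19; Count 16 8 3 18 19; Count 17 8 3 18 19;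
  Count 18 8 3 18 19; Count 18 1 0 4 5; Count 19 1 0 4 5; Count 18 2 0 6 7; Count 19 2 0 6 7;
  Count 18 3 0 8 9; Count 19 3 0 8 9; Count 18 4 1 10 11; Count 19 4 1 10 11;
  Count 18 5 1 12 13; Count 19 5 1 12 13; Count 18 6 2 14 15; Count 19 6 2 14 15;
  Count 18 7 2 16 17; Count 19 7 2 16 17; Place 20; Separate 1 20 0; Separate 2 20 0;
  Separate 3 20 0; Separate 4 20 0; Separate 5 20 0; Separate 6 20 0; Separate 7 20 0;
  Separate 8 20 0; Separate 10 20 9; Separate 11 20 0; Separate 12 20 0; Separate 13 20 9;
  Separate 14 20 0; Separate 15 20 9; Separate 16 20 9; Separate 17 20 0; Separate 18 20 0;
  Separate 19 20 9; Count 20 0 1 2 3; Place 21; Separate 1 21 0; Separate 2 21 0;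
  Separate 3 21 0; Separate 4 21 0; Separate 5 21 0; Separate 6 21 0; Separate 7 21 0;
  Separate 8 21 0; Separate 10 21 0; Separate 11 21 9; Separate 12 21 9; Separate 13 21 0;
  Separate 14 21 9; Separate 15 21 0; Separate 16 21 0; Separate 17 21 9; Separate 18 21 9;
  Separate 19 21 0; Separate 20 21 0; Count 21 0 1 2 3; Count 1 9 3 20 21; Count 2 9 3 20 21;
  Count 3 9 3 20 21; Count 4 9 3 20 21; Count 5 9 3 20 21; Count 6 9 3 20 21;
  Count 7 9 3 20 21; Count 8 9 3 20 21; Count 10 9 3 20 21; Count 11 9 3 20 21;
  Count 12 9 3 20 21; Count 13 9 3 20 21; Count 14 9 3 20 21; Count 15 9 3 20 21;
  Count 16 9 3 20 21; Count 17 9 3 20 21; Count 18 9 3 20 21; Count 19 9 3 20 21;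
  Count 20 9 3 20 21; Count 20 1 0 4 5; Count 21 1 0 4 5; Count 20 2 0 6 7; Count 21 2 0 6 7;
  Count 20 3 0 8 9; Count 21 3 0 8 9; Count 20 4 1 10 11; Count 21 4 1 10 11;
  Count 20 5 1 12 13; Count 21 5 1 12 13; Count 20 6 2 14 15; Count 21 6 2 14 15;
  Count 20 7 2 16 17; Count 21 7 2 16 17; Count 20 8 3 18 19; Count 21 8 3 18 19; Place 22;
  Separate 1 22 0; Separate 2 22 0; Separate 3 22 0; Separate 4 22 0; Separate 5 22 0;
  Separate 6 22 0; Separate 7 22 0; Separate 8 22 0; Separate 9 22 0; Separate 11 22 0;
  Separate 12 22 0; Separate 13 22 0; Separate 14 22 0; Separate 15 22 0; Separate 16 22 0;
  Separate 17 22 0; Separate 18 22 0; Separate 19 22 0; Separate 20 22 0; Separate 21 22 0;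
  Count 22 0 1 2 3; Place 23; Separate 1 23 0; Separate 2 23 0; Separate 3 23 0;
  Separate 4 23 0; Separate 5 23 0; Separate 6 23 0; Separate 7 23 0; Separate 8 23 0;
  Separate 9 23 0; Separate 11 23 0; Separate 12 23 0; Separate 13 23 0; Separate 14 23 0;
  Separate 15 23 0; Separate 16 23 0; Separate 17 23 0; Separate 18 23 0; Separate 19 23 0;
  Separate 20 23 0; Separate 21 23 0; Separate 22 23 0; Count 23 0 1 2 3; Count 1 10 4 22 23;
  Count 2 10 4 22 23; Count 3 10 4 22 23; Count 4 10 4 22 23; Count 5 10 4 22 23;
  Count 6 10 4 22 23; Count 7 10 4 22 23; Count 8 10 4 22 23; Count 9 10 4 22 23;
  Count 11 10 4 22 23; Count 12 10 4 22 23; Count 13 10 4 22 23; Count 14 10 4 22 23;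
  Count 15 10 4 22 23; Count 16 10 4 22 23; Count 17 10 4 22 23; Count 18 10 4 22 23;
  Count 19 10 4 22 23; Count 20 10 4 22 23; Count 21 10 4 22 23; Count 22 10 4 22 23;
  Count 22 1 0 4 5; Count 23 1 0 4 5; Count 22 2 0 6 7; Count 23 2 0 6 7; Count 22 3 0 8 9;
  Count 23 3 0 8 9; Count 22 4 1 10 11; Count 23 4 1 10 11; Count 22 5 1 12 13;
  Count 23 5 1 12 13; Count 22 6 2 14 15; Count 23 6 2 14 15; Count 22 7 2 16 17;
  Count 23 7 2 16 17; Count 22 8 3 18 19; Count 23 8 3 18 19; Count 22 9 3 20 21;
  Count 23 9 3 20 21; Place 24; Separate 1 24 0; Separate 2 24 0; Separate 3 24 0;
  Separate 4 24 0; Separate 5 24 0; Separate 6 24 0; Separate 7 24 0; Separate 8 24 0;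
  Separate 9 24 0; Separate 10 24 0; Separate 12 24 0; Separate 13 24 0; Separate 14 24 0;
  Separate 15 24 0; Separate 16 24 0; Separate 17 24 0; Separate 18 24 0; Separate 19 24 0;
  Separate 20 24 0; Separate 21 24 0; Separate 22 24 0; Separate 23 24 0; Count 24 0 1 2 3;
  Place 25; Separate 1 25 0; Separate 2 25 0; Separate 3 25 0; Separate 4 25 0;
  Separate 5 25 0; Separate 6 25 0; Separate 7 25 0; Separate 8 25 0; Separate 9 25 0;
  Separate 10 25 0; Separate 12 25 0; Separate 13 25 0; Separate 14 25 0; Separate 15 25 0;
  Separate 16 25 0; Separate 17 25 0; Separate 18 25 0; Separate 19 25 0; Separate 20 25 0;
  Separate 21 25 0; Separate 22 25 0; Separate 23 25 11; Separate 24 25 0; Count 25 0 1 2 3;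
  Count 1 11 4 24 25; Count 2 11 4 24 25; Count 3 11 4 24 25; Count 4 11 4 24 25;
  Count 5 11 4 24 25; Count 6 11 4 24 25; Count 7 11 4 24 25; Count 8 11 4 24 25;
  Count 9 11 4 24 25; Count 10 11 4 24 25; Count 12 11 4 24 25; Count 13 11 4 24 25;
  Count 14 11 4 24 25; Count 15 11 4 24 25; Count 16 11 4 24 25; Count 17 11 4 24 25;
  Count 18 11 4 24 25; Count 19 11 4 24 25; Count 20 11 4 24 25; Count 21 11 4 24 25;
  Count 22 11 4 24 25; Count 23 11 4 24 25; Count 24 11 4 24 25; Count 24 1 0 4 5;
  Count 25 1 0 4 5; Count 24 2 0 6 7; Count 25 2 0 6 7; Count 24 3 0 8 9; Count 25 3 0 8 9;
  Count 24 4 1 10 11; Count 25 4 1 10 11; Count 24 5 1 12 13; Count 25 5 1 12 13;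
  Count 24 6 2 14 15; Count 25 6 2 14 15; Count 24 7 2 16 17; Count 25 7 2 16 17;
  Count 24 8 3 18 19; Count 25 8 3 18 19; Count 24 9 3 20 21; Count 25 9 3 20 21;
  Count 24 10 4 22 23; Count 25 10 4 22 23; Place 26; Separate 1 26 0; Separate 2 26 0;
  Separate 3 26 0; Separate 4 26 0; Separate 5 26 0; Separate 6 26 0; Separate 7 26 0;
  Separate 8 26 0; Separate 9 26 0; Separate 10 26 0; Separate 11 26 0; Separate 13 26 0;
  Separate 14 26 0; Separate 15 26 0; Separate 16 26 0; Separate 17 26 0; Separate 18 26 0;
  Separate 19 26 0; Separate 20 26 0; Separate 21 26 0; Separate 22 26 0; Separate 23 26 12;
  Separate 24 26 0; Separate 25 26 12; Count 26 0 1 2 3; Place 27; Separate 1 27 0;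
  Separate 2 27 0; Separate 3 27 0; Separate 4 27 0; Separate 5 27 0; Separate 6 27 0;
  Separate 7 27 0; Separate 8 27 0; Separate 9 27 0; Separate 10 27 0; Separate 11 27 0;
  Separate 13 27 0; Separate 14 27 0; Separate 15 27 0; Separate 16 27 0; Separate 17 27 0;
  Separate 18 27 0; Separate 19 27 0; Separate 20 27 0; Separate 21 27 0; Separate 22 27 0;
  Separate 23 27 0; Separate 24 27 12; Separate 25 27 0; Separate 26 27 0; Count 27 0 1 2 3;
  Count 1 12 5 26 27; Count 2 12 5 26 27; Count 3 12 5 26 27; Count 4 12 5 26 27;
  Count 5 12 5 26 27; Count 6 12 5 26 27; Count 7 12 5 26 27; Count 8 12 5 26 27;
  Count 9 12 5 26 27; Count 10 12 5 26 27; Count 11 12 5 26 27; Count 13 12 5 26 27;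
  Count 14 12 5 26 27; Count 15 12 5 26 27; Count 16 12 5 26 27; Count 17 12 5 26 27;
  Count 18 12 5 26 27; Count 19 12 5 26 27; Count 20 12 5 26 27; Count 21 12 5 26 27;
  Count 22 12 5 26 27; Count 23 12 5 26 27; Count 24 12 5 26 27; Count 25 12 5 26 27;
  Count 26 12 5 26 27; Count 26 1 0 4 5; Count 27 1 0 4 5; Count 26 2 0 6 7; Count 27 2 0 6 7;
  Count 26 3 0 8 9; Count 27 3 0 8 9; Count 26 4 1 10 11; Count 27 4 1 10 11;
  Count 26 5 1 12 13; Count 27 5 1 12 13; Count 26 6 2 14 15; Count 27 6 2 14 15;
  Count 26 7 2 16 17; Count 27 7 2 16 17; Count 26 8 3 18 19; Count 27 8 3 18 19;
  Count 26 9 3 20 21; Count 27 9 3 20 21; Count 26 10 4 22 23; Count 27 10 4 22 23;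
  Count 26 11 4 24 25; Count 27 11 4 24 25; Place 28; Separate 1 28 0; Separate 2 28 0;
  Separate 3 28 0; Separate 4 28 0; Separate 5 28 0; Separate 6 28 0; Separate 7 28 0;
  Separate 8 28 0; Separate 9 28 0; Separate 10 28 0; Separate 11 28 0; Separate 12 28 0;
  Separate 14 28 0; Separate 15 28 0; Separate 16 28 0; Separate 17 28 0; Separate 18 28 0;
  Separate 19 28 0; Separate 20 28 0; Separate 21 28 0; Separate 22 28 0; Separate 23 28 13;
  Separate 24 28 0; Separate 25 28 13; Separate 26 28 13; Separate 27 28 0; Count 28 0 1 2 3;
  Place 29; Separate 1 29 0; Separate 2 29 0; Separate 3 29 0; Separate 4 29 0;
  Separate 5 29 0; Separate 6 29 0; Separate 7 29 0; Separate 8 29 0; Separate 9 29 0;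
  Separate 10 29 0; Separate 11 29 0; Separate 12 29 0; Separate 14 29 0; Separate 15 29 0;
  Separate 16 29 0; Separate 17 29 0; Separate 18 29 0; Separate 19 29 0; Separate 20 29 0;
  Separate 21 29 0; Separate 22 29 13; Separate 23 29 0; Separate 24 29 0; Separate 25 29 0;
  Separate 26 29 0; Separate 27 29 0; Separate 28 29 0; Count 29 0 1 2 3; Count 1 13 5 28 29;
  Count 2 13 5 28 29; Count 3 13 5 28 29; Count 4 13 5 28 29; Count 5 13 5 28 29;
  Count 6 13 5 28 29; Count 7 13 5 28 29; Count 8 13 5 28 29; Count 9 13 5 28 29;
  Count 10 13 5 28 29; Count 11 13 5 28 29; Count 12 13 5 28 29; Count 14 13 5 28 29;
  Count 15 13 5 28 29; Count 16 13 5 28 29; Count 17 13 5 28 29; Count 18 13 5 28 29;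
  Count 19 13 5 28 29; Count 20 13 5 28 29; Count 21 13 5 28 29; Count 22 13 5 28 29;
  Count 23 13 5 28 29; Count 24 13 5 28 29; Count 25 13 5 28 29; Count 26 13 5 28 29;
  Count 27 13 5 28 29; Count 28 13 5 28 29; Count 28 1 0 4 5; Count 29 1 0 4 5;
  Count 28 2 0 6 7; Count 29 2 0 6 7; Count 28 3 0 8 9; Count 29 3 0 8 9; Count 28 4 1 10 11;
  Count 29 4 1 10 11; Count 28 5 1 12 13; Count 29 5 1 12 13; Count 28 6 2 14 15;
  Count 29 6 2 14 15; Count 28 7 2 16 17; Count 29 7 2 16 17; Count 28 8 3 18 19;
  Count 29 8 3 18 19; Count 28 9 3 20 21; Count 29 9 3 20 21; Count 28 10 4 22 23;
  Count 29 10 4 22 23; Count 28 11 4 24 25; Count 29 11 4 24 25; Count 28 12 5 26 27;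
  Count 29 12 5 26 27; Place 30; Separate 1 30 0; Separate 2 30 0; Separate 3 30 0;
  Separate 4 30 0; Separate 5 30 0; Separate 6 30 0; Separate 7 30 0; Separate 8 30 0;
  Separate 9 30 0; Separate 10 30 0; Separate 11 30 0; Separate 12 30 0; Separate 13 30 0;
  Separate 15 30 0; Separate 16 30 0; Separate 17 30 0; Separate 18 30 0; Separate 19 30 0;
  Separate 20 30 0; Separate 21 30 0; Separate 22 30 0; Separate 23 30 0; Separate 24 30 14;
  Separate 25 30 0; Separate 26 30 0; Separate 27 30 14; Separate 28 30 0; Separate 29 30 0;
  Count 30 0 1 2 3; Count 1 14 6 23 30; Count 2 14 6 23 30; Count 3 14 6 23 30;
  Count 4 14 6 23 30; Count 5 14 6 23 30; Count 6 14 6 23 30; Count 7 14 6 23 30;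
  Count 8 14 6 23 30; Count 9 14 6 23 30; Count 10 14 6 23 30; Count 11 14 6 23 30;
  Count 12 14 6 23 30; Count 13 14 6 23 30; Count 15 14 6 23 30; Count 16 14 6 23 30;
  Count 17 14 6 23 30; Count 18 14 6 23 30; Count 19 14 6 23 30; Count 20 14 6 23 30;
  Count 21 14 6 23 30; Count 22 14 6 23 30; Count 23 14 6 23 30; Count 24 14 6 23 30;
  Count 25 14 6 23 30; Count 26 14 6 23 30; Count 27 14 6 23 30; Count 28 14 6 23 30;
  Count 29 14 6 23 30; Place 31; Separate 1 31 0; Separate 2 31 0; Separate 3 31 0;
  Separate 4 31 0; Separate 5 31 0; Separate 6 31 0; Separate 7 31 0; Separate 8 31 0;
  Separate 9 31 0; Separate 10 31 0; Separate 11 31 0; Separate 12 31 0; Separate 13 31 0;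
  Separate 14 31 0; Separate 16 31 0; Separate 17 31 0; Separate 18 31 0; Separate 19 31 0;
  Separate 20 31 0; Separate 21 31 0; Separate 22 31 0; Separate 23 31 15; Separate 24 31 0;
  Separate 25 31 15; Separate 26 31 15; Separate 27 31 0; Separate 28 31 15; Separate 29 31 0;
  Separate 30 31 0; Count 31 0 1 2 3; Count 1 15 6 29 31; Count 2 15 6 29 31;
  Count 3 15 6 29 31; Count 4 15 6 29 31; Count 5 15 6 29 31; Count 6 15 6 29 31;
  Count 7 15 6 29 31; Count 8 15 6 29 31; Count 9 15 6 29 31; Count 10 15 6 29 31;
  Count 11 15 6 29 31; Count 12 15 6 29 31; Count 13 15 6 29 31; Count 14 15 6 29 31;
  Count 16 15 6 29 31; Count 17 15 6 29 31; Count 18 15 6 29 31; Count 19 15 6 29 31;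
  Count 20 15 6 29 31; Count 21 15 6 29 31; Count 22 15 6 29 31; Count 23 15 6 29 31;
  Count 24 15 6 29 31; Count 25 15 6 29 31; Count 26 15 6 29 31; Count 27 15 6 29 31;
  Count 28 15 6 29 31; Count 29 15 6 29 31; Count 30 15 6 29 31; Place 32; Separate 1 32 0;
  Separate 2 32 0; Separate 3 32 0; Separate 4 32 0; Separate 5 32 0; Separate 6 32 0;
  Separate 7 32 0; Separate 8 32 0; Separate 9 32 0; Separate 10 32 0; Separate 11 32 0;
  Separate 12 32 0; Separate 13 32 0; Separate 14 32 0; Separate 15 32 0; Separate 17 32 0;
  Separate 18 32 0; Separate 19 32 0; Separate 20 32 0; Separate 21 32 0; Separate 22 32 16;
  Separate 23 32 0; Separate 24 32 0; Separate 25 32 0; Separate 26 32 0; Separate 27 32 0;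
  Separate 28 32 0; Separate 29 32 16; Separate 30 32 0; Separate 31 32 0; Count 32 0 1 2 3;
  Count 1 16 7 26 32; Count 2 16 7 26 32; Count 3 16 7 26 32; Count 4 16 7 26 32;
  Count 5 16 7 26 32; Count 6 16 7 26 32; Count 7 16 7 26 32; Count 8 16 7 26 32;
  Count 9 16 7 26 32; Count 10 16 7 26 32; Count 11 16 7 26 32; Count 12 16 7 26 32;
  Count 13 16 7 26 32; Count 14 16 7 26 32; Count 15 16 7 26 32; Count 17 16 7 26 32;
  Count 18 16 7 26 32; Count 19 16 7 26 32; Count 20 16 7 26 32; Count 21 16 7 26 32;
  Count 22 16 7 26 32; Count 23 16 7 26 32; Count 24 16 7 26 32; Count 25 16 7 26 32;
  Count 26 16 7 26 32; Count 27 16 7 26 32; Count 28 16 7 26 32; Count 29 16 7 26 32;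
  Count 30 16 7 26 32; Count 31 16 7 26 32; Place 33; Separate 1 33 0; Separate 2 33 0;
  Separate 3 33 0; Separate 4 33 0; Separate 5 33 0; Separate 6 33 0; Separate 7 33 0;
  Separate 8 33 0; Separate 9 33 0; Separate 10 33 0; Separate 11 33 0; Separate 12 33 0;
  Separate 13 33 0; Separate 14 33 0; Separate 15 33 0; Separate 16 33 0; Separate 18 33 0;
  Separate 19 33 0; Separate 20 33 0; Separate 21 33 0; Separate 22 33 0; Separate 23 33 17;
  Separate 24 33 0; Separate 25 33 17; Separate 26 33 17; Separate 27 33 0; Separate 28 33 17;
  Separate 29 33 0; Separate 30 33 0; Separate 31 33 17; Separate 32 33 0; Count 33 0 1 2 3;
  Count 1 17 7 24 33; Count 2 17 7 24 33; Count 3 17 7 24 33; Count 4 17 7 24 33;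
  Count 5 17 7 24 33; Count 6 17 7 24 33; Count 7 17 7 24 33; Count 8 17 7 24 33;
  Count 9 17 7 24 33; Count 10 17 7 24 33; Count 11 17 7 24 33; Count 12 17 7 24 33;
  Count 13 17 7 24 33; Count 14 17 7 24 33; Count 15 17 7 24 33; Count 16 17 7 24 33;
  Count 18 17 7 24 33; Count 19 17 7 24 33; Count 20 17 7 24 33; Count 21 17 7 24 33;
  Count 22 17 7 24 33; Count 23 17 7 24 33; Count 24 17 7 24 33; Count 25 17 7 24 33;
  Count 26 17 7 24 33; Count 27 17 7 24 33; Count 28 17 7 24 33; Count 29 17 7 24 33;
  Count 30 17 7 24 33; Count 31 17 7 24 33; Count 32 17 7 24 33; Place 34; Separate 1 34 0;
  Separate 2 34 0; Separate 3 34 0; Separate 4 34 0; Separate 5 34 0; Separate 6 34 0;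
  Separate 7 34 0; Separate 8 34 0; Separate 9 34 0; Separate 10 34 0; Separate 11 34 0;
  Separate 12 34 0; Separate 13 34 0; Separate 14 34 0; Separate 15 34 0; Separate 16 34 0;
  Separate 17 34 0; Separate 18 34 0; Separate 19 34 0; Separate 20 34 0; Separate 21 34 0;
  Separate 23 34 0; Separate 24 34 0; Separate 25 34 0; Separate 26 34 0; Separate 27 34 0;
  Separate 28 34 0; Separate 29 34 0; Separate 30 34 0; Separate 31 34 0; Separate 32 34 0;
  Separate 33 34 0; Count 34 0 1 2 3; Count 34 1 0 4 5; Count 34 2 0 6 7; Count 34 3 0 8 9;
  Count 34 4 1 10 11; Count 34 5 1 12 13; Count 34 6 2 14 15; Count 34 7 2 16 17;
  Count 34 8 3 18 19; Count 34 9 3 20 21; Count 10 22 10 20 34; Count 11 22 10 20 34;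
  Count 12 22 10 20 34; Count 13 22 10 20 34; Count 14 22 10 20 34; Count 15 22 10 20 34;
  Count 16 22 10 20 34; Count 17 22 10 20 34; Count 18 22 10 20 34; Count 19 22 10 20 34;
  Count 20 22 10 20 34; Count 21 22 10 20 34; Count 23 22 10 20 34; Count 24 22 10 20 34;
  Count 25 22 10 20 34; Count 26 22 10 20 34; Count 27 22 10 20 34; Count 28 22 10 20 34;
  Count 29 22 10 20 34; Count 30 22 10 20 34; Count 31 22 10 20 34; Count 32 22 10 20 34;
  Count 33 22 10 20 34; Place 35; Separate 1 35 0; Separate 2 35 0; Separate 3 35 0;
  Separate 4 35 0; Separate 5 35 0; Separate 6 35 0; Separate 7 35 0; Separate 8 35 0;
  Separate 9 35 0; Separate 10 35 0; Separate 11 35 0; Separate 12 35 0; Separate 13 35 0;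
  Separate 14 35 0; Separate 15 35 0; Separate 16 35 0; Separate 17 35 0; Separate 18 35 0;
  Separate 19 35 0; Separate 20 35 0; Separate 21 35 0; Separate 22 35 0; Separate 24 35 0;
  Separate 25 35 0; Separate 26 35 0; Separate 27 35 0; Separate 28 35 0; Separate 29 35 0;
  Separate 30 35 0; Separate 31 35 0; Separate 32 35 0; Separate 33 35 0; Separate 34 35 0;
  Count 35 0 1 2 3; Count 1 23 10 14 35; Count 2 23 10 14 35; Count 3 23 10 14 35;
  Count 4 23 10 14 35; Count 5 23 10 14 35; Count 6 23 10 14 35; Count 7 23 10 14 35;
  Count 8 23 10 14 35; Count 9 23 10 14 35; Count 10 23 10 14 35; Count 11 23 10 14 35;
  Count 12 23 10 14 35; Count 13 23 10 14 35; Count 14 23 10 14 35; Count 15 23 10 14 35;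
  Count 16 23 10 14 35; Count 17 23 10 14 35; Count 18 23 10 14 35; Count 19 23 10 14 35;
  Count 20 23 10 14 35; Count 21 23 10 14 35; Count 22 23 10 14 35; Count 24 23 10 14 35;
  Count 25 23 10 14 35; Count 26 23 10 14 35; Count 27 23 10 14 35; Count 28 23 10 14 35;
  Count 29 23 10 14 35; Count 30 23 10 14 35; Count 31 23 10 14 35; Count 32 23 10 14 35;
  Count 33 23 10 14 35; Count 34 23 10 14 35; Place 36; Separate 1 36 0; Separate 2 36 0;
  Separate 3 36 0; Separate 4 36 0; Separate 5 36 0; Separate 6 36 0; Separate 7 36 0;
  Separate 8 36 0; Separate 9 36 0; Separate 10 36 0; Separate 11 36 0; Separate 12 36 0;
  Separate 13 36 0; Separate 14 36 0; Separate 15 36 0; Separate 16 36 0; Separate 17 36 0;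
  Separate 18 36 0; Separate 19 36 0; Separate 20 36 0; Separate 21 36 0; Separate 22 36 0;
  Separate 23 36 0; Separate 25 36 0; Separate 26 36 0; Separate 27 36 0; Separate 28 36 0;
  Separate 29 36 0; Separate 30 36 0; Separate 31 36 0; Separate 32 36 0; Separate 33 36 0;
  Separate 34 36 0; Separate 35 36 0; Count 36 0 1 2 3; Count 36 1 0 4 5; Count 36 2 0 6 7;
  Count 36 3 0 8 9; Count 36 4 1 10 11; Count 36 5 1 12 13; Count 36 6 2 14 15;
  Count 36 7 2 16 17; Count 36 8 3 18 19; Count 36 9 3 20 21; Count 10 24 11 17 36;
  Count 11 24 11 17 36; Count 12 24 11 17 36; Count 13 24 11 17 36; Count 14 24 11 17 36;
  Count 15 24 11 17 36; Count 16 24 11 17 36; Count 17 24 11 17 36; Count 18 24 11 17 36;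
  Count 19 24 11 17 36; Count 20 24 11 17 36; Count 21 24 11 17 36; Count 22 24 11 17 36;
  Count 23 24 11 17 36; Count 25 24 11 17 36; Count 26 24 11 17 36; Count 27 24 11 17 36;
  Count 28 24 11 17 36; Count 29 24 11 17 36; Count 30 24 11 17 36; Count 31 24 11 17 36;
  Count 32 24 11 17 36; Count 33 24 11 17 36; Count 34 24 11 17 36; Count 35 24 11 17 36;
  Place 37; Separate 1 37 0; Separate 2 37 0; Separate 3 37 0; Separate 4 37 0;
  Separate 5 37 0; Separate 6 37 0; Separate 7 37 0; Separate 8 37 0; Separate 9 37 0;
  Separate 10 37 0; Separate 11 37 0; Separate 12 37 0; Separate 13 37 0; Separate 14 37 0;
  Separate 15 37 0; Separate 16 37 0; Separate 17 37 0; Separate 18 37 0; Separate 19 37 0;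
  Separate 20 37 0; Separate 21 37 0; Separate 22 37 0; Separate 23 37 0; Separate 24 37 0;
  Separate 26 37 0; Separate 27 37 0; Separate 28 37 0; Separate 29 37 0; Separate 30 37 0;
  Separate 31 37 0; Separate 32 37 0; Separate 33 37 0; Separate 34 37 0; Separate 35 37 25;
  Separate 36 37 0; Count 37 0 1 2 3; Count 1 25 11 19 37; Count 2 25 11 19 37;
  Count 3 25 11 19 37; Count 4 25 11 19 37; Count 5 25 11 19 37; Count 6 25 11 19 37;
  Count 7 25 11 19 37; Count 8 25 11 19 37; Count 9 25 11 19 37; Count 10 25 11 19 37;
  Count 11 25 11 19 37; Count 12 25 11 19 37; Count 13 25 11 19 37; Count 14 25 11 19 37;
  Count 15 25 11 19 37; Count 16 25 11 19 37; Count 17 25 11 19 37; Count 18 25 11 19 37;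
  Count 19 25 11 19 37; Count 20 25 11 19 37; Count 21 25 11 19 37; Count 22 25 11 19 37;
  Count 23 25 11 19 37; Count 24 25 11 19 37; Count 26 25 11 19 37; Count 27 25 11 19 37;
  Count 28 25 11 19 37; Count 29 25 11 19 37; Count 30 25 11 19 37; Count 31 25 11 19 37;
  Count 32 25 11 19 37; Count 33 25 11 19 37; Count 34 25 11 19 37; Count 35 25 11 19 37;
  Count 36 25 11 19 37; Place 38; Separate 1 38 0; Separate 2 38 0; Separate 3 38 0;
  Separate 4 38 0; Separate 5 38 0; Separate 6 38 0; Separate 7 38 0; Separate 8 38 0;
  Separate 9 38 0; Separate 10 38 0; Separate 11 38 0; Separate 12 38 0; Separate 13 38 0;
  Separate 14 38 0; Separate 15 38 0; Separate 16 38 0; Separate 17 38 0; Separate 18 38 0;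
  Separate 19 38 0; Separate 20 38 0; Separate 21 38 0; Separate 22 38 0; Separate 23 38 0;
  Separate 24 38 0; Separate 25 38 0; Separate 26 38 0; Separate 27 38 0; Separate 28 38 0;
  Separate 29 38 0; Separate 30 38 0; Separate 32 38 0; Separate 33 38 0; Separate 34 38 0;
  Separate 35 38 31; Separate 36 38 0; Separate 37 38 31; Count 38 0 1 2 3;
  Count 1 31 15 18 38; Count 2 31 15 18 38; Count 3 31 15 18 38; Count 4 31 15 18 38;
  Count 5 31 15 18 38; Count 6 31 15 18 38; Count 7 31 15 18 38; Count 8 31 15 18 38;
  Count 9 31 15 18 38; Count 10 31 15 18 38; Count 11 31 15 18 38; Count 12 31 15 18 38;
  Count 13 31 15 18 38; Count 14 31 15 18 38; Count 15 31 15 18 38; Count 16 31 15 18 38;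
  Count 17 31 15 18 38; Count 18 31 15 18 38; Count 19 31 15 18 38; Count 20 31 15 18 38;
  Count 21 31 15 18 38; Count 22 31 15 18 38; Count 23 31 15 18 38; Count 24 31 15 18 38;
  Count 25 31 15 18 38; Count 26 31 15 18 38; Count 27 31 15 18 38; Count 28 31 15 18 38;
  Count 29 31 15 18 38; Count 30 31 15 18 38; Count 32 31 15 18 38; Count 33 31 15 18 38;
  Count 34 31 15 18 38; Count 35 31 15 18 38; Count 36 31 15 18 38; Count 37 31 15 18 38;
  Place 39; Separate 1 39 0; Separate 2 39 0; Separate 3 39 0; Separate 4 39 0;
  Separate 5 39 0; Separate 6 39 0; Separate 7 39 0; Separate 8 39 0; Separate 9 39 0;
  Separate 10 39 0; Separate 11 39 0; Separate 12 39 0; Separate 13 39 0; Separate 14 39 0;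
  Separate 15 39 0; Separate 16 39 0; Separate 17 39 0; Separate 18 39 0; Separate 19 39 0;
  Separate 20 39 0; Separate 21 39 0; Separate 22 39 0; Separate 23 39 0; Separate 24 39 0;
  Separate 25 39 0; Separate 26 39 0; Separate 27 39 0; Separate 28 39 0; Separate 29 39 0;
  Separate 30 39 0; Separate 31 39 0; Separate 32 39 0; Separate 33 39 0; Separate 34 39 0;
  Separate 36 39 0; Separate 37 39 0; Separate 38 39 0; Count 39 0 1 2 3; Count 39 1 0 4 5;
  Count 39 2 0 6 7; Count 39 3 0 8 9; Count 39 4 1 10 11; Count 39 5 1 12 13;
  Count 39 6 2 14 15; Count 39 7 2 16 17; Count 39 8 3 18 19; Count 39 9 3 20 21;
  Count 10 35 23 26 39; Count 11 35 23 26 39; Count 12 35 23 26 39; Count 13 35 23 26 39;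
  Count 14 35 23 26 39; Count 15 35 23 26 39; Count 16 35 23 26 39; Count 17 35 23 26 39;
  Count 18 35 23 26 39; Count 19 35 23 26 39; Count 20 35 23 26 39; Count 21 35 23 26 39;
  Count 22 35 23 26 39; Count 23 35 23 26 39; Count 24 35 23 26 39; Count 25 35 23 26 39;
  Count 26 35 23 26 39; Count 27 35 23 26 39; Count 28 35 23 26 39; Count 29 35 23 26 39;
  Count 30 35 23 26 39; Count 31 35 23 26 39; Count 32 35 23 26 39; Count 33 35 23 26 39;
  Count 34 35 23 26 39; Count 36 35 23 26 39; Count 37 35 23 26 39; Count 38 35 23 26 39].

Definition cands_match_D (C : cand_table) : bool :=
  all (fun u => all (fun v => cand C u v == [:: named_dcode u v]) (iota 0 40)) (iota 0 40).

Lemma run_certificate : oapp cands_match_D false (run initial_cands certificate).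
Proof. by vm_compute. Qed.

(** * Reconstruction in a scheme with the diagram of D *)

Section Placement.
Variables (X : finType) (R : X -> X -> nat).
Hypothesis R_eq0 : forall x y, (R x y == 0) = (x == y).
Hypothesis R_sym : forall x y, R x y = R y x.
Hypothesis R_lt : forall x y, R x y < 12.
Hypothesis R_p1 : forall x y j, j < 12 ->
  #|[set z | (R x z == 3) && (R z y == j)]| = p1_tab (R x y) j.

Lemma card_R_nbrs x : #|[set z | R x z == 3]| = 3.
Proof.
have /eqP x_x : R x x == 0 by rewrite R_eq0.
transitivity (p1_tab (R x x) 3); last by rewrite x_x.
by rewrite -R_p1 //; apply: eq_card => z; rewrite !inE (R_sym z x) andbb.
Qed.

Lemma count_R_nbrs x y z1 z2 z3 j : j < 12 ->
  R y z1 = 3 -> R y z2 = 3 -> R y z3 = 3 -> uniq [:: z1; z2; z3] ->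
  count_mem j [:: R x z1; R x z2; R x z3] = p1_tab (R x y) j.
Proof.
move=> lt_j y_z1 y_z2 y_z3 uniq_z.
have nbrs_y : [set z | R y z == 3] = [set z in [:: z1; z2; z3]].
  apply/esym/eqP; rewrite eqEcard card_R_nbrs cardsE (card_uniqP uniq_z) leqnn andbT.
  by apply/subsetP => z; rewrite !inE => /or3P [] /eqP ->; rewrite ?y_z1 ?y_z2 ?y_z3.
rewrite (R_sym x y) -R_p1 //.
have -> : [set z | (R y z == 3) && (R z x == j)] = [set z in [:: z1; z2; z3] | R z x == j].
  by apply/setP => z; rewrite !in_set -(in_set (fun z => R y z == 3)) nbrs_y in_set.
by rewrite (@card_set_in_count _ _ (fun z => R z x == j) uniq_z) /= !(R_sym x).
Qed.

Variable x0 : X.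

Definition nbrs0 : seq X := enum [set z | R x0 z == 3].

Definition place_next (s : seq X) (v : nat) : X :=
  if v == 0 then x0 else if v < 4 then nth x0 nbrs0 v.-1 else
  let: (p, q, j) := place_rule v in
  odflt x0 [pick z | (R (nth x0 s p) z == 3) && (R z (nth x0 s q) == j)].

Fixpoint placements (n : nat) : seq X :=
  if n is n'.+1 then rcons (placements n') (place_next (placements n') n') else [::].

Definition placed (v : nat) : X := nth x0 (placements 40) v.

Lemma size_placements n : size (placements n) = n.
Proof. by elim: n => //= n IHn; rewrite size_rcons IHn. Qed.

Lemma nth_placements n v : v < n -> nth x0 (placements n) v = place_next (placements v) v.
Proof.
elim: n => // n IHn; rewrite ltnS leq_eqVlt => /orP [/eqP ->|lt_vn] /=;
  by rewrite nth_rcons size_placements ?ltnn ?eqxx ?lt_vn ?IHn.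
Qed.

Lemma placedE v : v < 40 -> placed v = place_next (placements v) v.
Proof. exact: nth_placements. Qed.

Lemma nth_placements_placed v p : p < v -> v <= 40 -> nth x0 (placements v) p = placed p.
Proof. by move=> lt_pv le_v; rewrite /placed !nth_placements // (leq_trans lt_pv). Qed.

Definition cands_sound (C : cand_table) : Prop :=
  forall u v, u < 40 -> v < 40 -> R (placed u) (placed v) \in cand C u v.

Lemma restrict_sound C u v S :
  cands_sound C -> R (placed u) (placed v) \in S -> cands_sound (restrict C u v S).
Proof.
move=> sound_C uv_S u' v' lt_u' lt_v'; rewrite /restrict !cand_set_cand.
case: andP => [[/eqP eq_u /eqP eq_v]|_]; first by subst; rewrite mem_filter R_sym uv_S sound_C.
case: andP => [[/eqP eq_u /eqP eq_v]|_]; first by subst; rewrite mem_filter uv_S sound_C.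
exact: sound_C.
Qed.

Lemma cand_single C u v : cands_sound C -> u < 40 -> v < 40 ->
  size (cand C u v) == 1 -> R (placed u) (placed v) = head 0 (cand C u v).
Proof.
move=> sound_C lt_u lt_v; move: (sound_C u v lt_u lt_v).
by case: (cand C u v) => [|h [|]] //=; rewrite inE => /eqP.
Qed.

Lemma place_step_sound C v C' :
  cands_sound C -> place_step C v = Some C' -> cands_sound C'.
Proof.
move=> sound_C; rewrite /place_step; case rule_v: (place_rule v) => [[p q] j].
case: ifP => // /and5P [lt_v ge4_v lt_pv lt_qv /and3P [lt_j size1 pos]] [<-].
have [lt_p lt_q] : p < 40 /\ q < 40 by split; apply: ltn_trans lt_v.
have pq_h := cand_single sound_C lt_p lt_q size1.
have placed_v : placed v = odflt x0 [pick z | (R (placed p) z == 3) && (R z (placed q) == j)].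
  rewrite placedE // /place_next rule_v.
  have [-> ->] : (v == 0) = false /\ (v < 4) = false by split; apply/negbTE; lia.
  by rewrite !nth_placements_placed // ltnW.
have [z pqz] : exists z, (R (placed p) z == 3) && (R z (placed q) == j).
  have : 0 < #|[set z | (R (placed p) z == 3) && (R z (placed q) == j)]| by rewrite R_p1 // pq_h.
  by case/card_gt0P => z; rewrite inE; exists z.
have [p_v v_q] : R (placed p) (placed v) = 3 /\ R (placed v) (placed q) = j.
  by rewrite placed_v; case: pickP => [z' /andP [/eqP -> /eqP ->]|/(_ z)] //; rewrite pqz.
apply: restrict_sound; last by rewrite v_q inE.
by apply: restrict_sound; last by rewrite p_v inE.
Qed.

Lemma placed_neq C u v : cands_sound C -> u < 40 -> v < 40 ->
  0 \notin cand C u v -> placed u != placed v.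
Proof.
move=> sound_C lt_u lt_v; apply: contra => /eqP eq_uv.
have /eqP v_v : R (placed v) (placed v) == 0 by rewrite R_eq0.
by have := sound_C u v lt_u lt_v; rewrite eq_uv v_v.
Qed.

Lemma count_step_sound C a b c1 c2 c3 C' :
  cands_sound C -> count_step C a b c1 c2 c3 = Some C' -> cands_sound C'.
Proof.
move=> sound_C; rewrite /count_step.
case: ifP => // /and5P [lt_a lt_b lt_c1 lt_c2 /and5P [lt_c3 size1 /eqP b_c1 /eqP b_c2
  /and4P [/eqP b_c3 c1_c2 c1_c3 c2_c3]]] [<-].
set h := head 0 (cand C a b); set g := placed.
have nbr_b c : c < 40 -> cand C b c = [:: 3] -> R (g b) (g c) = 3.
  by move=> lt_c b_c; have := sound_C b c lt_b lt_c; rewrite b_c inE => /eqP.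
have compat : p1_compatible h (R (g a) (g c1)) (R (g a) (g c2)) (R (g a) (g c3)).
  apply/allP => j; rewrite mem_iota => /andP [_ lt_j].
  rewrite (count_R_nbrs _ lt_j (nbr_b _ lt_c1 b_c1) (nbr_b _ lt_c2 b_c2) (nbr_b _ lt_c3 b_c3)).
    by rewrite (cand_single sound_C).
  by rewrite /= !inE negb_or !(placed_neq sound_C).
have a_c1 := sound_C a c1 lt_a lt_c1; have a_c2 := sound_C a c2 lt_a lt_c2.
have a_c3 := sound_C a c3 lt_a lt_c3.
apply: restrict_sound; last first.
  rewrite mem_filter a_c3 andbT; apply/hasP; exists (R (g a) (g c1)) => //.
  by apply/hasP; exists (R (g a) (g c2)).
apply: restrict_sound; last first.
  rewrite mem_filter a_c2 andbT; apply/hasP; exists (R (g a) (g c1)) => //.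
  by apply/hasP; exists (R (g a) (g c3)).
apply: restrict_sound => //.
rewrite mem_filter a_c1 andbT; apply/hasP; exists (R (g a) (g c2)) => //.
by apply/hasP; exists (R (g a) (g c3)).
Qed.

Lemma separate_step_sound C c d a C' :
  cands_sound C -> separate_step C c d a = Some C' -> cands_sound C'.
Proof.
move=> sound_C; rewrite /separate_step.
case: ifP => // /and4P [lt_c lt_d lt_a disjoint_cd] [<-].
apply: (restrict_sound sound_C); rewrite mem_filter mem_iota leq0n R_lt !andbT.
apply: contraNneq disjoint_cd => /eqP; rewrite R_eq0 => /eqP eq_cd.
apply/hasP; exists (R (placed a) (placed c)); first exact: sound_C.
by rewrite eq_cd; apply: sound_C.
Qed.

Lemma run_sound C l C' : cands_sound C -> run C l = Some C' -> cands_sound C'.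
Proof.
elim: l C => [|st l IHl] C sound_C /=; first by case=> <-.
case run_st: (run_step C st) => [C1|] //=; apply: IHl.
case: st run_st => /= [v|a b c1 c2 c3|c d a];
  [exact: place_step_sound|exact: count_step_sound|exact: separate_step_sound].
Qed.

Lemma size_nbrs0 : size nbrs0 = 3.
Proof. by rewrite /nbrs0 -cardE card_R_nbrs. Qed.

Lemma placed0 : placed 0 = x0.
Proof. by rewrite placedE. Qed.

Lemma placed_nbrs0 k : 0 < k < 4 -> placed k = nth x0 nbrs0 k.-1.
Proof.
by case/andP=> k_gt0 k_lt4; rewrite placedE ?(leq_trans k_lt4) // /place_next gtn_eqF ?k_lt4.
Qed.

Lemma initial_cands_sound : cands_sound initial_cands.
Proof.
have x0_nbrs k : 0 < k < 4 -> R (placed 0) (placed k) = 3.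
  move=> k_nbr; rewrite placed0 placed_nbrs0 //.
  have : nth x0 nbrs0 k.-1 \in nbrs0 by rewrite mem_nth // size_nbrs0; lia.
  by rewrite mem_enum inE => /eqP.
have nbrs_neq k l : 0 < k < 4 -> 0 < l < 4 -> k != l -> R (placed k) (placed l) \in nonzero_codes.
  move=> k_nbr l_nbr neq_kl; rewrite mem_filter mem_iota leq0n R_lt !andbT R_eq0.
  by rewrite !placed_nbrs0 // nth_uniq ?size_nbrs0 ?enum_uniq //; lia.
rewrite /initial_cands.
do 3!(apply: restrict_sound; last by apply: nbrs_neq).
do 3!(apply: restrict_sound; last by rewrite x0_nbrs).
move=> u v lt_u lt_v; rewrite /cand !(nth_map 0) ?size_iota // !nth_iota // !add0n.
case: eqP => [->|_]; last by rewrite mem_iota leq0n R_lt.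
by have /eqP -> : R (placed v) (placed v) == 0 by rewrite R_eq0.
Qed.

Lemma placed_rel u v : u < 40 -> v < 40 -> R (placed u) (placed v) = named_dcode u v.
Proof.
move=> lt_u lt_v; have := run_certificate.
case run_cert: (run initial_cands certificate) => [C|//] match_C.
have /allP/(_ u) : cands_match_D C := match_C.
rewrite mem_iota lt_u => /(_ isT) /allP /(_ v); rewrite mem_iota lt_v => /(_ isT) /eqP C_uv.
by have := run_sound initial_cands_sound run_cert lt_u lt_v; rewrite C_uv inE => /eqP.
Qed.

Lemma dcode_placed_index u v :
  dcode u v = R (placed (index u D_order)) (placed (index v D_order)).
Proof.
have lt_index w : index w D_order < 40 by rewrite -size_D_order index_mem mem_D_order.
by rewrite placed_rel ?lt_index ?named_dcode_index.
Qed.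

End Placement.

Section SameDiagramAsD.
Variables (X I : finType) (rel : X -> X -> I) (r0 r1 : I) (sigma : I -> 'I_6 * 'I_2).
Hypotheses (scheme : is_assoc_scheme rel r0) (sigma_bij : bijective sigma).
Hypotheses (sigma_r0 : sigma r0 = D_R0) (sigma_r1 : sigma r1 = D_R1).
Hypothesis sigma_valency : forall i, valency rel r0 i = valency D_rel D_R0 (sigma i).
Hypothesis sigma_p1 : forall i j, pnum rel i r1 j = pnum D_rel (sigma i) D_R1 (sigma j).

Definition coded_rel (x y : X) : nat := rcode (sigma (rel x y)).

Let sigma_inj : injective sigma := bij_inj sigma_bij.

Lemma coded_rel_eq x y i : (coded_rel x y == rcode (sigma i)) = (rel x y == i).
Proof. by rewrite (can_eq rcodeK) (inj_eq sigma_inj). Qed.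

Lemma coded_rel_eq0 x y : (coded_rel x y == 0) = (x == y).
Proof. by have [diag _] := scheme; rewrite -[0]/(rcode D_R0) -sigma_r0 coded_rel_eq diag. Qed.

Lemma coded_rel_sym x y : coded_rel x y = coded_rel y x.
Proof. by have [_ [sym _]] := scheme; rewrite /coded_rel sym. Qed.

Lemma coded_rel_lt x y : coded_rel x y < 12.
Proof. exact: rcode_lt. Qed.

Lemma card_coded_rel_p1 x y j : j < 12 ->
  #|[set z | (coded_rel x z == 3) && (coded_rel z y == j)]| = p1_tab (coded_rel x y) j.
Proof.
move=> lt_j; have [sigma' sigmaK sigma'K] := sigma_bij.
rewrite -(rdecodeK lt_j) -{1}[rdecode j]sigma'K -rcode_D_R1 -sigma_r1.
have -> : [set z | (coded_rel x z == rcode (sigma r1)) &&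
                   (coded_rel z y == rcode (sigma (sigma' (rdecode j))))] =
          [set z | (rel x z == r1) && (rel z y == sigma' (rdecode j))].
  by apply/setP => z; rewrite !inE !coded_rel_eq.
by rewrite (card_scheme_pnum scheme) sigma_p1 sigma'K pnum_D_R1.
Qed.

Lemma card_same_diagram_D : #|X| = 40.
Proof.
rewrite (card_scheme_valency scheme) (eq_bigr _ (fun i _ => sigma_valency i)).
by rewrite -sum_valency_D (reindex sigma) //; apply: onW_bij.
Qed.

End SameDiagramAsD.

Theorem proposition3p1 (X I : finType) (rel : X -> X -> I) (r0 r1 : I) :
  is_assoc_scheme rel r0 ->
  same_rdd rel r0 r1 D_rel D_R0 D_R1 ->
  scheme_iso rel r1 D_rel D_R1.
Proof.
move=> scheme [sigma [sigma_bij sigma_r0 sigma_r1 sigma_valency sigma_p1]].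
have [_ [_ [/(_ r0) [x0 _] _]]] := scheme.
have R_eq0 := coded_rel_eq0 scheme sigma_bij sigma_r0.
have R_p1 := card_coded_rel_p1 scheme sigma_bij sigma_r1 sigma_p1.
have embed_D :=
  dcode_placed_index R_eq0 (coded_rel_sym sigma scheme) (coded_rel_lt rel sigma) R_p1 x0.
apply: (scheme_iso_of_pullback (s0 := D_R0) sigma_bij sigma_r1
          (g := fun w => placed (coded_rel rel sigma) x0 (index w D_order))).
- by move=> u v; rewrite D_rel_eq dcode_eq0.
- by rewrite (card_same_diagram_D scheme sigma_bij sigma_valency) !card_prod card_ord card_bool.
- by move=> u v; apply: (can_inj rcodeK); rewrite rcode_D_rel embed_D.
Qed.
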